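(* Let $\mathcal{G}$ be a hereditary graph class such that $\omega_{\mathcal{G}}:=\max_{H\in\mathcal{G}} mw(H)$ exists. Then for any graph $G$, $mw(G)\le\max(\mathcal{G}\text{-}mc(G),\ \omega_{\mathcal{G}})$.
   Context: A graph class is a set of graphs containing at least one non-empty graph; it is hereditary if it is closed under taking induced subgraphs. A module of $G$ is a vertex set $M$ such that every vertex outside $M$ is adjacent to all or none of $M$. A $\mathcal{G}$-modular partition of $G$ is a partition of $V(G)$ into modules $M$ with $G[M]\in\mathcal{G}$, and $\mathcal{G}\text{-}mc(G)$ is the minimum size of such a partition. The modular-width $mw(G)$ is the maximum number of children of a prime node in the modular decomposition tree of $G$ (the inclusion tree of strong modules, where a node for module $M$ is prime if both $G[M]$ and its complement are connected), and $0$ if there is no prime node. *)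

From mathcomp Require Import all_boot.
Set Implicit Arguments. Unset Strict Implicit. Unset Printing Implicit Defensive.

Record graph := Graph {
  vtx :> finType;
  adj : rel vtx;
  adj_sym : symmetric adj;
  adj_irr : irreflexive adj }.

Definition nonempty_graph (G : graph) : Prop := 0 < #|vtx G|.

Section Induced.
Variables (G : graph) (M : {set vtx G}).
Definition ind_vtx : finType := {x : vtx G | x \in M}.
Definition ind_adj : rel ind_vtx := fun x y => adj (val x) (val y).
Lemma ind_adj_sym : symmetric ind_adj.
Proof. by move=> x y; rewrite /ind_adj adj_sym. Qed.
Lemma ind_adj_irr : irreflexive ind_adj.
Proof. by move=> x; rewrite /ind_adj adj_irr. Qed.
Definition induced : graph := Graph ind_adj_sym ind_adj_irr.
End Induced.

Definition graph_class (C : graph -> Prop) : Prop :=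
  exists H, C H /\ nonempty_graph H.

Definition hereditary (C : graph -> Prop) : Prop :=
  forall G : graph, C G -> forall M : {set vtx G}, C (induced M).

Section Modules.
Variable G : graph.
Implicit Types M N : {set vtx G}.

Definition is_module M : bool :=
  [forall x, (x \notin M) ==>
     ([forall y in M, adj x y] || [forall y in M, ~~ adj x y])].

Definition overlap M N : bool :=
  [&& M :&: N != set0, ~~ (M \subset N) & ~~ (N \subset M)].

Definition strong M : bool :=
  [&& M != set0, is_module M & [forall N, is_module N ==> ~~ overlap M N]].

(* Children of a node M in the modular decomposition tree: the maximal
   strong modules properly contained in M. *)
Definition children M : {set {set vtx G}} :=
  [set N | [&& strong N, N \proper M &
     [forall N', (strong N' && (N' \proper M)) ==> ~~ (N \proper N')]]].

(* G[M] connected (M non-empty assumed via strong). *)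
Definition connected_in (e : rel (vtx G)) M : bool :=
  [forall x in M, forall y in M,
     connect [rel u v | [&& u \in M, v \in M & e u v]] x y].

Definition co_adj : rel (vtx G) := fun x y => (x != y) && ~~ adj x y.

Definition prime_node M : bool :=
  [&& strong M, connected_in (@adj G) M & connected_in co_adj M].

End Modules.

Definition mw (G : graph) : nat :=
  \max_(M : {set vtx G} | prime_node M) #|children M|.

Definition modular_partition (C : graph -> Prop) (G : graph)
    (P : {set {set vtx G}}) : Prop :=
  partition P [set: vtx G] /\
  forall M, M \in P -> is_module M /\ C (induced M).
Arguments modular_partition : clear implicits.

Definition is_mc (C : graph -> Prop) (G : graph) (k : nat) : Prop :=
  (exists P, modular_partition C G P /\ #|P| = k) /\
  (forall P, modular_partition C G P -> k <= #|P|).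

From mathcomp Require Import all_boot.
Set Implicit Arguments. Unset Strict Implicit. Unset Printing Implicit Defensive.

(* Let M be a prime node of G and P a C-modular partition.  If M lies inside a
   block X, then M is still a prime node of G[X] with at least as many
   children, so it has at most mw(G[X]) <= w children.  Otherwise every block
   meeting M is a module that neither contains M nor overlaps it, hence lies
   properly inside M and therefore inside a single child (a maximal strong
   submodule); the children, being disjoint unions of blocks, number at most
   #|P|. *)

Section Modules.
Variable G : graph.
Implicit Types M A B D X Y S : {set G}.

Lemma is_moduleP M :
  reflect (forall x y z, x \notin M -> y \in M -> z \in M -> adj x y = adj x z)
          (is_module M).
Proof.
apply: (iffP forallP) => [modM x y z xM yM zM | adjE x].
  have := modM x; rewrite xM /= => /orP[/forallP allA | /forallP allN].
    by have := allA y; have := allA z; rewrite yM zM /= => -> ->.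
  by have := allN y; have := allN z; rewrite yM zM /= => /negbTE -> /negbTE ->.
apply/implyP => xM; case: (boolP [forall y in M, adj x y]) => //= /forallPn[y].
rewrite negb_imply => /andP[yM nxy]; apply/forallP => z; apply/implyP => zM.
by rewrite -(adjE x y z xM yM zM).
Qed.

Lemma is_moduleU A B :
  is_module A -> is_module B -> A :&: B != set0 -> is_module (A :|: B).
Proof.
move=> /is_moduleP modA /is_moduleP modB /set0Pn[c /setIP[cA cB]].
apply/is_moduleP => x y z; rewrite !inE negb_or => /andP[xA xB].
have adjE u : (u \in A) || (u \in B) -> adj x u = adj x c.
  by case/orP => [uA | uB]; [apply: modA | apply: modB].
by move=> /adjE -> /adjE ->.
Qed.

Lemma strong_is_module M : strong M -> is_module M.
Proof. by case/and3P. Qed.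

Lemma strong_module_sub M Y :
  strong M -> is_module Y -> M :&: Y != set0 -> ~~ (M \subset Y) -> Y \subset M.
Proof.
case/and3P => _ _ /forallP/(_ Y) noOverlap modY meet notMY.
by move: noOverlap; rewrite modY /overlap meet notMY /= negbK.
Qed.

Lemma connected_in_cut (e : rel G) M S x y :
  connected_in e M -> S \subset M -> x \in S -> y \in M -> y \notin S ->
  exists u v, [/\ u \in S, v \in M, v \notin S & e u v].
Proof.
move=> /forallP/(_ x) + sSM xS yM yS; rewrite (subsetP sSM _ xS) /=.
move=> /forallP/(_ y); rewrite yM /= => /connectP[p].
elim: p x xS => [|z p IHp] x xS /=; first by move=> _ yx; rewrite yx xS in yS.
move=> /andP[/and3P[_ zM exz] pathp] ylast.
case: (boolP (z \in S)) => [zS | zS]; first exact: IHp zS pathp ylast.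
by exists x, z.
Qed.

(* With a in A - B and b in B - A, every u in A - B and v in B satisfy
   adj u v = adj a b, so the cut between A - B and B has no edge either in
   G[M] or in its complement. *)
Lemma prime_node_cover M A B :
  prime_node M -> is_module A -> is_module B ->
  ~~ (A \subset B) -> ~~ (B \subset A) -> A :|: B != M.
Proof.
case/and3P => _ connM coconnM /is_moduleP modA /is_moduleP modB nAB nBA.
apply/eqP => coverM.
have [a aA aB] := subsetPn nAB; have [b bB bA] := subsetPn nBA.
have adjE u v : u \in A :\: B -> v \in B -> adj u v = adj a b.
  rewrite inE => /andP[uB uA] vB.
  by rewrite (modB u v b uB vB bB) adj_sym (modA b u a bA uA aA) adj_sym.
have sSM : A :\: B \subset M.
  by apply/subsetP => u; rewrite -coverM !inE => /andP[_ ->].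
have aS : a \in A :\: B by rewrite inE aA aB.
have bM : b \in M by rewrite -coverM inE bB orbT.
have bS : b \notin A :\: B by rewrite inE bB.
have outB v : v \in M -> v \notin A :\: B -> v \in B.
  by rewrite -coverM !inE negb_and negbK => /orP[vA | ->] // /orP[// | /negP].
case ab : (adj a b).
- have [u [v [uS vM vS]]] := connected_in_cut coconnM sSM aS bM bS.
  by rewrite /co_adj /= (adjE u v uS (outB v vM vS)) ab andbF.
- have [u [v [uS vM vS]]] := connected_in_cut connM sSM aS bM bS.
  by rewrite (adjE u v uS (outB v vM vS)) ab.
Qed.

Lemma prime_node_strong M : prime_node M -> strong M.
Proof. by case/and3P. Qed.

Lemma prime_node_nonempty M : prime_node M -> M != set0.
Proof. by case/and3P => /and3P[]. Qed.

Lemma maximal_proper_module_strong M D :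
  prime_node M -> is_module D -> D != set0 -> D \proper M ->
  (forall Y, is_module Y -> D \proper Y -> ~~ (Y \proper M)) -> strong D.
Proof.
move=> primeM modD D0 DM maxD; rewrite /strong D0 modD /=.
apply/forallP => Y; apply/implyP => modY; apply/negP => /and3P[meet nDY nYD].
have [z /setIP[zD zY]] := set0Pn _ meet.
have notMY : ~~ (M \subset Y).
  by apply: contra nDY; apply: subset_trans (proper_sub DM).
have YM : Y \subset M.
  apply: strong_module_sub (prime_node_strong primeM) modY _ notMY.
  by apply/set0Pn; exists z; rewrite inE (subsetP (proper_sub DM)) ?zY.
have modDY : is_module (D :|: Y) by apply: is_moduleU.
have /negP[] := maxD _ modDY (properUl nYD).
by rewrite properEneq (prime_node_cover primeM) // subUset (proper_sub DM) YM.
Qed.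

Lemma prime_node_module_sub_child M X :
  prime_node M -> is_module X -> X != set0 -> X \proper M ->
  exists2 D, D \in children M & X \subset D.
Proof.
move=> primeM modX X0 XM.
pose between Y := [&& is_module Y, X \subset Y & Y \proper M].
have betweenX : between X by rewrite /between modX subxx XM.
have [D /and3P[modD XD DM] maxD] := arg_maxnP (fun Y => #|Y|) betweenX.
have noLarger Y : between Y -> ~~ (D \proper Y).
  by move=> /maxD; apply: contraL => /proper_card; rewrite -ltnNge.
have strongD : strong D.
  apply: maximal_proper_module_strong primeM modD _ DM _.
    by apply: contraNneq X0 => D0; rewrite -subset0 -D0.
  move=> Y modY DY; apply: contraTN (DY) => YM; apply: noLarger.
  by rewrite /between modY (subset_trans XD (proper_sub DY)).
exists D => //; rewrite inE strongD DM /=.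
apply/forallP => N; apply/implyP => /andP[strongN NM].
apply/negP => DN; have betweenN : between N.
  by rewrite /between strong_is_module // NM (subset_trans XD (proper_sub DN)).
by rewrite (negbTE (noLarger N betweenN)) in DN.
Qed.

Lemma children_meet_eq M D1 D2 z :
  D1 \in children M -> D2 \in children M -> z \in D1 -> z \in D2 -> D1 = D2.
Proof.
rewrite !inE => /and3P[strong1 D1M /forallP max1] /and3P[strong2 D2M /forallP max2].
move=> zD1 zD2; have meet : D1 :&: D2 != set0 by apply/set0Pn; exists z; rewrite inE zD1.
move: (strong1) => /and3P[_ _ /forallP/(_ D2)].
rewrite strong_is_module //= /overlap meet /= negb_and !negbK => /orP[D12 | D21].
  by apply/eqP; rewrite eqEproper D12 /=; have := max1 D2; rewrite strong2 D2M.
by apply/esym/eqP; rewrite eqEproper D21 /=; have := max2 D1; rewrite strong1 D1M.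
Qed.

Lemma card_children_le_mw M : prime_node M -> #|children M| <= mw G.
Proof. exact: (@leq_bigmax_cond _ (@prime_node G) (fun M => #|children M|)). Qed.

Section Partition.
Variable P : {set {set G}}.
Hypotheses (partP : partition P [set: G]) (modP : {in P, forall B, is_module B}).

Let block_mem y : pblock P y \in P.
Proof. by rewrite pblock_mem // (cover_partition partP). Qed.

Let mem_block y : y \in pblock P y.
Proof. by rewrite mem_pblock (cover_partition partP). Qed.

Lemma pblock_sub_child M D y :
  prime_node M -> {in P, forall B, ~~ (M \subset B)} ->
  D \in children M -> y \in D -> pblock P y \subset D.
Proof.
move=> primeM notInBlock childD yD.
have DM : D \proper M by move: childD; rewrite inE => /and3P[].
have modB := modP (block_mem y).
have BM : pblock P y \subset M.
  apply: strong_module_sub (prime_node_strong primeM) modB _ (notInBlock _ (block_mem y)).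
  by apply/set0Pn; exists y; rewrite inE mem_block (subsetP (proper_sub DM)).
have BpM : pblock P y \proper M by rewrite properE BM notInBlock.
have B0 : pblock P y != set0 by apply/set0Pn; exists y.
have [D' childD' BD'] := prime_node_module_sub_child primeM modB B0 BpM.
by rewrite (children_meet_eq childD childD' yD (subsetP BD' _ (mem_block y))).
Qed.

Lemma card_children_le_partition M :
  prime_node M -> {in P, forall B, ~~ (M \subset B)} -> #|children M| <= #|P|.
Proof.
move=> primeM notInBlock.
have [x _] := set0Pn _ (prime_node_nonempty primeM).
pose vertex_of D := odflt x [pick y in D].
have vertex_ofP D : D \in children M -> vertex_of D \in D.
  rewrite inE => /and3P[/and3P[/set0Pn[z zD] _ _] _ _].
  by rewrite /vertex_of; case: pickP => [y // | /(_ z)]; rewrite zD.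
have block_of_inj : {in children M &, injective (fun D => pblock P (vertex_of D))}.
  move=> D1 D2 child1 child2 sameB.
  apply: children_meet_eq (child1) (child2) (vertex_ofP _ child1) _.
  have := pblock_sub_child primeM notInBlock child2 (vertex_ofP _ child2).
  by move/subsetP; apply; rewrite -sameB mem_block.
rewrite -(card_in_imset block_of_inj); apply: subset_leq_card.
by apply/subsetP => _ /imsetP[D _ ->].
Qed.
End Partition.
End Modules.

Section InducedByModule.
Variables (G : graph) (X : {set G}).
Hypothesis modX : is_module X.
Local Notation H := (induced X).
Local Notation ext S := ((val : H -> G) @: S).

Definition restr (S : {set G}) : {set H} := [set y : H | val y \in S].

Lemma ext_restr (S : {set G}) : S \subset X -> ext (restr S) = S.
Proof.
move=> SX; apply/setP => x; apply/imsetP/idP => [[y] | xS].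
  by rewrite inE => yS ->.
by exists (Sub x (subsetP SX x xS) : H); rewrite ?inE SubK.
Qed.

Lemma ext_subE (A B : {set H}) : (ext A \subset ext B) = (A \subset B).
Proof.
apply/idP/idP => [AB | ]; last exact: imsetS.
apply/subsetP => x xA; have := subsetP AB (val x).
by rewrite !(mem_imset _ _ val_inj); apply.
Qed.

Lemma ext_properE (A B : {set H}) : (ext A \proper ext B) = (A \proper B).
Proof. by rewrite !properE !ext_subE. Qed.

Lemma is_module_ext (S : {set H}) : is_module (ext S) = is_module S.
Proof.
apply/is_moduleP/(is_moduleP (G := H) S) => [modS x y z xS yS zS | modS].
  by apply: (modS (val x)); rewrite ?(mem_imset _ _ val_inj).
move=> x _ _ xS /imsetP[y yS ->] /imsetP[z zS ->].
have [xX | xX] := boolP (x \in X); last first.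
  exact: (is_moduleP _ modX x (val y) (val z) xX (valP y) (valP z)).
apply: (modS (Sub x xX : H)) => //.
by apply: contra xS => xS'; apply/imsetP; exists (Sub x xX : H); rewrite ?SubK.
Qed.

Lemma overlap_ext (A B : {set H}) : overlap (ext A) (ext B) = overlap A B.
Proof.
rewrite /overlap -imsetI; last by move=> a b _ _; apply: val_inj.
by rewrite imset_eq0 !ext_subE.
Qed.

Lemma strong_of_ext (S : {set H}) : strong (ext S) -> strong S.
Proof.
case/and3P => S0 modS /forallP noOverlap.
rewrite /strong -(imset_eq0 val) S0 -is_module_ext modS /=.
apply/forallP => N; apply/implyP => modN.
by have := noOverlap (ext N); rewrite is_module_ext modN overlap_ext.
Qed.

(* A module of G overlapping ext S lies inside the strong module M, hence
   inside X, so it comes from a module of H. *)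
Lemma strong_ext M (S : {set H}) :
  strong M -> M \subset X -> ext S \subset M -> strong S -> strong (ext S).
Proof.
move=> strongM MX SM /and3P[S0 modS /forallP noOverlap].
rewrite /strong imset_eq0 S0 is_module_ext modS /=.
apply/forallP => Y; apply/implyP => modY; apply/negP => overlapSY.
have := overlapSY; case/and3P => /set0Pn[z /setIP[zS zY]] nSY _.
have YM : Y \subset M.
  apply: strong_module_sub strongM modY _ _.
    by apply/set0Pn; exists z; rewrite inE (subsetP SM) ?zY.
  by apply: contra nSY; apply: subset_trans.
move: modY overlapSY; rewrite -(ext_restr (subset_trans YM MX)).
rewrite is_module_ext overlap_ext => modY overlapSY.
by have := noOverlap (restr Y); rewrite modY overlapSY.
Qed.

Lemma connected_in_restr (e : rel G) (e' : rel H) (M : {set G}) :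
  (forall u v, e' u v = e (val u) (val v)) -> M \subset X ->
  connected_in e M -> connected_in e' (restr M).
Proof.
move=> eE MX /forallP connM; apply/forallP => x; apply/implyP; rewrite inE => xM.
apply/forallP => y; apply/implyP; rewrite inE => yM.
have /connectP[p pathp lastp] := implyP (forallP (implyP (connM (val x)) xM) (val y)) yM.
have lift_path q u : u \in M -> path [rel a b | [&& a \in M, b \in M & e a b]] u q ->
    connect [rel a b | [&& a \in restr M, b \in restr M & e' a b]]
      (insubd x u) (insubd x (last u q)).
  elim: q u => [|z q IHq] u uM /=; first by move=> _; apply: connect0.
  case/andP => /and3P[_ zM euz] pathq; apply: connect_trans (IHq z zM pathq).
  apply: connect1; rewrite /= !inE eE !val_insubd (subsetP MX u uM) (subsetP MX z zM).
  by rewrite uM zM euz.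
by have := lift_path p _ xM pathp; rewrite -lastp !valKd.
Qed.

Lemma strong_restr (M : {set G}) : strong M -> M \subset X -> strong (restr M).
Proof. by move=> strongM MX; apply: strong_of_ext; rewrite ext_restr. Qed.

Lemma prime_node_restr (M : {set G}) :
  prime_node M -> M \subset X -> prime_node (restr M).
Proof.
case/and3P => strongM connM coconnM MX.
rewrite /prime_node strong_restr // (connected_in_restr _ MX connM) //=.
by apply: (connected_in_restr _ MX coconnM) => u v; rewrite /co_adj /= val_eqE.
Qed.

Lemma card_children_le_restr (M : {set G}) :
  prime_node M -> M \subset X -> #|children M| <= #|children (restr M)|.
Proof.
move=> primeM MX; have strongM := prime_node_strong primeM.
have childX N : N \in children M -> N \subset X.
  by rewrite inE => /and3P[_ /proper_sub NM _]; apply: subset_trans MX.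
have restr_inj : {in children M &, injective restr}.
  move=> N1 N2 /childX N1X /childX N2X sameR.
  by rewrite -(ext_restr N1X) -(ext_restr N2X) sameR.
rewrite -(card_in_imset restr_inj); apply: subset_leq_card.
apply/subsetP => _ /imsetP[N childN ->]; have NX := childX N childN.
move: childN; rewrite !inE => /and3P[strongN NM /forallP maxN].
rewrite strong_restr // -ext_properE !ext_restr // NM /=.
apply/forallP => N'; apply/implyP => /andP[strongN' N'M]; apply/negP => NN'.
rewrite -ext_properE ext_restr // in N'M; rewrite -ext_properE ext_restr // in NN'.
have := maxN (ext N'); rewrite (strong_ext strongM MX (proper_sub N'M) strongN').
by rewrite N'M NN'.
Qed.

Lemma card_children_le_mw_induced (M : {set G}) :
  prime_node M -> M \subset X -> #|children M| <= mw H.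
Proof.
move=> primeM MX; apply: leq_trans (card_children_le_restr primeM MX) _.
exact/card_children_le_mw/prime_node_restr.
Qed.
End InducedByModule.

Lemma mw_le_modular_partition (C : graph -> Prop) (w : nat) (G : graph)
    (P : {set {set G}}) :
  (forall H, C H -> mw H <= w) -> modular_partition C G P -> mw G <= maxn #|P| w.
Proof.
move=> mwC [partP modP]; apply/bigmax_leqP => M primeM.
have [/existsP[X /andP[XP MX]] | notInBlock] := boolP [exists X in P, M \subset X].
  have [modX CX] := modP X XP.
  apply: leq_trans (leq_maxr _ _); apply: leq_trans (mwC _ CX).
  exact: card_children_le_mw_induced.
apply: leq_trans (leq_maxl _ _); apply: (card_children_le_partition partP) primeM _.
- by move=> B /modP[].
- by move=> B BP; apply: contra notInBlock => MB; apply/existsP; exists B; rewrite BP.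
Qed.

(* Only the bound on mw over C is needed: the blocks of any C-modular
   partition are themselves in C, so neither heredity nor the minimality of k
   plays a role. *)
Theorem theorem5 (C : graph -> Prop) (w : nat) :
  graph_class C -> hereditary C ->
  (exists H, C H /\ mw H = w) -> (forall H, C H -> mw H <= w) ->
  forall (G : graph) (k : nat), is_mc C G k -> mw G <= maxn k w.
Proof.
move=> _ _ _ mwC G k [[P [partP <-]] _].
exact: mw_le_modular_partition mwC partP.
Qed.
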